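(* Let $\mathbf M=(M,\vee,(\sqsubseteq^n)_{n\ge 1})$ be a multi-argument specialization semilattice. Then there exist a set $X$ and a closure operation $K$ on $\mathcal P(X)$ such that $\mathbf M$ embeds into the multi-argument specialization semilattice $(\mathcal P(X),\cup,(\sqsubseteq^n)_{n\ge1})$ associated to the closure space $(X,K)$, where $a\sqsubseteq^n b_1,\dots,b_n$ holds iff $a\subseteq Kb_1\cup\dots\cup Kb_n$. That is, there is an injective map $\varphi:M\to\mathcal P(X)$ with $\varphi(a\vee b)=\varphi(a)\cup\varphi(b)$ for all $a,b\in M$, and for all $n\ge1$ and $a,b_1,\dots,b_n\in M$: $a\sqsubseteq^n b_1,\dots,b_n$ in $\mathbf M$ if and only if $\varphi(a)\subseteq K\varphi(b_1)\cup\dots\cup K\varphi(b_n)$.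
   Context: A multi-argument specialization semilattice is a join semilattice $(M,\vee)$ (with order $a\le b$ iff $a\vee b=b$) together with, for each $n\ge1$, an $(n+1)$-ary relation written $a\sqsubseteq^n b_1,\dots,b_n$ (or $a\sqsubseteq b_1,\dots,b_n$), such that for all elements: (M1) $a\sqsubseteq a$; (M2) if $a\sqsubseteq b_1,b_2,\dots,b_n$ and $b_1\sqsubseteq c$ then $a\sqsubseteq c,b_2,\dots,b_n$; (M3) if $a\le b$ and $b\sqsubseteq c_1,\dots,c_m$ then $a\sqsubseteq c_1,\dots,c_m$; (M4) if $a\sqsubseteq b_1,\dots,b_n$ then $a\sqsubseteq b_{\sigma1},\dots,b_{\sigma n}$ for every permutation $\sigma$ of $\{1,\dots,n\}$; (M5) if $a\sqsubseteq b_1,\dots,b_n,b_n$ then $a\sqsubseteq b_1,\dots,b_n$; (M6) if $a\sqsubseteq b_1,\dots,b_n$ then $a\sqsubseteq b_1,\dots,b_n,b_{n+1}$; (M7) if $a\sqsubseteq b_1,\dots,b_n$ and $a_1\sqsubseteq b_1,\dots,b_n$ then $a\vee a_1\sqsubseteq b_1,\dots,b_n$. A closure operation $K$ on $\mathcal P(X)$ is extensive ($x\subseteq Kx$), idempotent ($KKx=Kx$) and isotone ($x\subseteq y\Rightarrow Kx\subseteq Ky$). *)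

From Stdlib Require Import List Permutation.
Import ListNotations.

Definition subset {X : Type} (A B : X -> Prop) : Prop := forall x, A x -> B x.
Definition union {X : Type} (A B : X -> Prop) : X -> Prop := fun x => A x \/ B x.
Definition empty {X : Type} : X -> Prop := fun _ => False.

Definition is_closure {X : Type} (K : (X -> Prop) -> (X -> Prop)) : Prop :=
  (forall A, subset A (K A)) /\
  (forall A, K (K A) = K A) /\
  (forall A B, subset A B -> subset (K A) (K B)).

Definition is_join_semilattice {M : Type} (join : M -> M -> M) : Prop :=
  (forall a b c, join a (join b c) = join (join a b) c) /\
  (forall a b, join a b = join b a) /\
  (forall a, join a a = a).

Definition sl_le {M : Type} (join : M -> M -> M) (a b : M) : Prop := join a b = b.

(* The multi-argument relation a ⊑^n b_1,...,b_n is encoded as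
   spec a [b_1; ...; b_n], meaningful only for nonempty lists (n = length >= 1). *)
Definition is_mss {M : Type} (join : M -> M -> M) (spec : M -> list M -> Prop) : Prop :=
  is_join_semilattice join /\
  (forall a, spec a [a]) /\
  (forall a b1 bs c, spec a (b1 :: bs) -> spec b1 [c] -> spec a (c :: bs)) /\
  (forall a b cs, cs <> [] -> sl_le join a b -> spec b cs -> spec a cs) /\
  (forall a bs bs', bs <> [] -> Permutation bs bs' -> spec a bs -> spec a bs') /\
  (forall a bs b, spec a (bs ++ [b; b]) -> spec a (bs ++ [b])) /\
  (forall a bs c, bs <> [] -> spec a bs -> spec a (bs ++ [c])) /\
  (forall a a1 bs, bs <> [] -> spec a bs -> spec a1 bs -> spec (join a a1) bs).

Definition union_K {X M : Type} (K : (X -> Prop) -> (X -> Prop)) (phi : M -> X -> Prop)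
  (bs : list M) : X -> Prop :=
  fold_right (fun b acc => union (K (phi b)) acc) empty bs.

From Stdlib Require Import List Permutation.
From Stdlib Require Import Classical FunctionalExtensionality PropExtensionality.
Import ListNotations.

(** The points of X witness failures: a point [inl y] for each [y], at which
    [a] fails when [a] is not below [y], and a point for each nonempty list [L],
    at which [a] fails when [a ⊑ L] does not hold; [phi a] is the set of points
    at which [a] fails.  For each [c] let [U_c] be the set of lists containing
    some [d] with [c ⊑ d], and let [K Y] consist of the points all of whose
    [U_c]-neighbourhoods meet [Y].  By M1 and the cut rule M2, [K (phi b)] is
    the complement of [U_b], so [phi a ⊆ K (phi b_1) ∪ ... ∪ K (phi b_n)] says
    that [a ⊑ L] for every [L] lying in all the [U_(b_i)].  The list
    [b_1,...,b_n] is one such [L] by M1; conversely [a ⊑ L] follows from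
    [a ⊑ b_1,...,b_n] by cutting each [b_i] to its witness in [L], then
    permuting, contracting and weakening. *)

Section NbhdClosure.
Variables (X I : Type) (U : I -> X -> Prop).

Definition nbhd_closure (Y : X -> Prop) : X -> Prop :=
  fun p => forall i, U i p -> exists q, Y q /\ U i q.

Lemma nbhd_closure_is_closure : is_closure nbhd_closure.
Proof.
  assert (ext : forall Y, subset Y (nbhd_closure Y)) by (intros Y p Hp i Hi; now exists p).
  split; [exact ext | split].
  - intros Y. apply functional_extensionality; intros p.
    apply propositional_extensionality; split; [|apply ext].
    intros Hp i Hi. destruct (Hp i Hi) as (q & Hq & Hiq). exact (Hq i Hiq).
  - intros A B HAB p Hp i Hi. destruct (Hp i Hi) as (q & Hq & Hiq).
    exists q. split; [apply HAB|]; assumption.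
Qed.

End NbhdClosure.

Arguments nbhd_closure {X I} U Y p.

Lemma union_K_iff {X M : Type} (K : (X -> Prop) -> X -> Prop) (phi : M -> X -> Prop) bs p :
  union_K K phi bs p <-> exists b, In b bs /\ K (phi b) p.
Proof.
  induction bs as [|b bs IH]; simpl.
  - split; [intros []|intros (b & [] & _)].
  - unfold union. rewrite IH. split.
    + intros [Hb|(c & Hc & Hk)]; eauto.
    + intros (c & [<-|Hc] & Hk); eauto.
Qed.

Section Semilattice.
Variables (M : Type) (join : M -> M -> M).
Hypothesis Hsl : is_join_semilattice join.

Lemma sl_le_refl a : sl_le join a a.
Proof. apply Hsl. Qed.

Lemma sl_le_antisym a b : sl_le join a b -> sl_le join b a -> a = b.
Proof.
  unfold sl_le. destruct Hsl as (_ & comm & _). intros Hab Hba.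
  now rewrite <- Hba, comm.
Qed.

Lemma sl_le_trans a b c : sl_le join a b -> sl_le join b c -> sl_le join a c.
Proof.
  unfold sl_le. destruct Hsl as (assoc & _ & _). intros Hab Hbc.
  now rewrite <- Hbc, assoc, Hab.
Qed.

Lemma sl_le_join_l a b : sl_le join a (join a b).
Proof. unfold sl_le. destruct Hsl as (assoc & _ & idem). now rewrite assoc, idem. Qed.

Lemma sl_le_join_r a b : sl_le join b (join a b).
Proof.
  unfold sl_le. destruct Hsl as (assoc & comm & idem).
  now rewrite (comm a b), assoc, idem.
Qed.

Lemma sl_join_le_iff a b c :
  sl_le join (join a b) c <-> sl_le join a c /\ sl_le join b c.
Proof.
  split.
  - intros Habc. split.
    + exact (sl_le_trans _ _ _ (sl_le_join_l a b) Habc).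
    + exact (sl_le_trans _ _ _ (sl_le_join_r a b) Habc).
  - unfold sl_le. destruct Hsl as (assoc & _ & _). intros [Hac Hbc].
    now rewrite <- assoc, Hbc.
Qed.

End Semilattice.

Section Representation.
Variables (M : Type) (join : M -> M -> M) (spec : M -> list M -> Prop).
Hypothesis Hmss : is_mss join spec.

Let Hsl : is_join_semilattice join := proj1 Hmss.

Lemma spec_refl a : spec a [a].
Proof. apply Hmss. Qed.

Lemma spec_cut a b bs c : spec a (b :: bs) -> spec b [c] -> spec a (c :: bs).
Proof. apply Hmss. Qed.

Lemma spec_le a b cs : cs <> [] -> sl_le join a b -> spec b cs -> spec a cs.
Proof. apply Hmss. Qed.

Lemma spec_perm a bs bs' : bs <> [] -> Permutation bs bs' -> spec a bs -> spec a bs'.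
Proof. apply Hmss. Qed.

Lemma spec_contract a bs b : spec a (bs ++ [b; b]) -> spec a (bs ++ [b]).
Proof. apply Hmss. Qed.

Lemma spec_weaken a bs c : bs <> [] -> spec a bs -> spec a (bs ++ [c]).
Proof. apply Hmss. Qed.

Lemma spec_join a a1 bs : bs <> [] -> spec a bs -> spec a1 bs -> spec (join a a1) bs.
Proof. apply Hmss. Qed.

Lemma spec_app a ds L : ds <> [] -> spec a ds -> spec a (ds ++ L).
Proof.
  intros Hne Hs. induction L as [|c L IH] using rev_ind.
  - now rewrite app_nil_r.
  - rewrite app_assoc. apply spec_weaken; [|exact IH].
    intros E. apply app_eq_nil in E. tauto.
Qed.

Lemma spec_dup_cons a x L : In x L -> spec a (x :: L) -> spec a L.
Proof.
  intros Hin Hs. destruct (in_split _ _ Hin) as (l1 & l2 & ->).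
  assert (Hne : forall l, l ++ [x] <> []) by (intros l E; now apply app_eq_nil in E).
  apply (spec_perm _ ((l1 ++ l2) ++ [x])); [apply Hne| |].
  - rewrite <- app_assoc. apply Permutation_app_head, Permutation_sym, Permutation_cons_append.
  - apply spec_contract, (spec_perm _ (x :: l1 ++ x :: l2)); [discriminate| |exact Hs].
    rewrite <- Permutation_middle. apply (Permutation_app_comm [x; x]).
Qed.

Lemma spec_dup_app a ds L : incl ds L -> spec a (ds ++ L) -> spec a L.
Proof.
  induction ds as [|d ds IH]; simpl; intros Hincl Hs; [exact Hs|].
  apply IH; [now apply incl_cons_inv in Hincl|].
  apply (spec_dup_cons _ d); [|exact Hs].
  apply in_or_app; right. apply Hincl; now left.
Qed.

Lemma spec_incl a ds L : ds <> [] -> incl ds L -> spec a ds -> spec a L.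
Proof. intros Hne Hincl Hs. apply (spec_dup_app _ ds); [exact Hincl|]. now apply spec_app. Qed.

Lemma spec_refine_app a L bs ds :
  (forall b, In b bs -> exists d, In d L /\ spec b [d]) -> incl ds L ->
  bs ++ ds <> [] -> spec a (bs ++ ds) -> spec a L.
Proof.
  revert ds. induction bs as [|b bs IH]; simpl; intros ds Hbs Hds Hne Hs.
  - exact (spec_incl _ _ _ Hne Hds Hs).
  - destruct (Hbs b (or_introl eq_refl)) as (d & Hd & Hbd).
    apply (IH (d :: ds)).
    + intros b' Hb'. apply Hbs; now right.
    + now apply incl_cons.
    + intros E. now apply app_eq_nil in E as [_ E].
    + apply (spec_perm _ (d :: bs ++ ds)); [discriminate|apply Permutation_middle|].
      exact (spec_cut _ _ _ _ Hs Hbd).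
Qed.

Lemma spec_refine a L bs :
  bs <> [] -> (forall b, In b bs -> exists d, In d L /\ spec b [d]) -> spec a bs -> spec a L.
Proof.
  intros Hne Hbs Hs. apply (spec_refine_app _ _ bs []); rewrite ?app_nil_r; auto.
  intros x [].
Qed.

Lemma spec_join_iff a b bs : bs <> [] -> spec (join a b) bs <-> spec a bs /\ spec b bs.
Proof.
  intros Hne. split.
  - intros Hs. split; apply (spec_le _ (join a b)); trivial.
    + apply (sl_le_join_l _ _ Hsl).
    + apply (sl_le_join_r _ _ Hsl).
  - intros [Ha Hb]. now apply spec_join.
Qed.


(* [inr (b, l)] is the point of the nonempty list [b :: l]. *)
Definition point : Type := (M + M * list M)%type.

Definition failures (a : M) (p : point) : Prop :=
  match p with
  | inl y => ~ sl_le join a y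
  | inr (b, l) => ~ spec a (b :: l)
  end.

Definition spec_nbhd (c : M) (p : point) : Prop :=
  match p with
  | inl _ => False
  | inr (b, l) => exists d, In d (b :: l) /\ spec c [d]
  end.

Lemma failures_inj a b : failures a = failures b -> a = b.
Proof.
  assert (le : forall a b, failures a = failures b -> sl_le join a b).
  { intros x y E. apply NNPP. intros N.
    change (failures x (inl y)) in N. rewrite E in N.
    exact (N (sl_le_refl _ _ Hsl y)). }
  intros E. apply (sl_le_antisym _ _ Hsl); apply le; [exact E|now symmetry].
Qed.

Lemma failures_join a b : failures (join a b) = union (failures a) (failures b).
Proof.
  apply functional_extensionality; intros p. apply propositional_extensionality.
  unfold union. destruct p as [y|[c l]]; simpl.
  - rewrite (sl_join_le_iff _ _ Hsl). split; [apply not_and_or|apply or_not_and].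
  - rewrite spec_join_iff by discriminate. split; [apply not_and_or|apply or_not_and].
Qed.

Lemma closure_failures b p : nbhd_closure spec_nbhd (failures b) p <-> ~ spec_nbhd b p.
Proof.
  split.
  - intros Hp Hb. destruct (Hp b Hb) as ([y|[c l]] & Hq & Hbq); [contradiction|].
    destruct Hbq as (d & Hd & Hbd). apply Hq.
    apply (spec_incl _ [d]); [discriminate|now apply incl_cons|exact Hbd].
  - intros Hn c Hc. exists (inr (c, [])). split.
    + intros Hbc. apply Hn. destruct p as [y|[e l]]; [contradiction|].
      destruct Hc as (d & Hd & Hcd). exists d. split; [exact Hd|].
      exact (spec_cut _ _ _ _ Hbc Hcd).
    + exists c. split; [now left|apply spec_refl].
Qed.

Lemma spec_iff_failures a bs : bs <> [] ->
  spec a bs <-> subset (failures a) (union_K (nbhd_closure spec_nbhd) failures bs).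
Proof.
  intros Hne. split.
  - intros Hs p Hp. apply union_K_iff, NNPP. intros N.
    assert (Hall : forall b, In b bs -> spec_nbhd b p).
    { intros b Hb. apply NNPP. intros Nb. apply N. exists b.
      split; [exact Hb|now apply closure_failures]. }
    destruct p as [y|[c l]].
    + destruct bs as [|b bs]; [contradiction|]. exact (Hall b (or_introl eq_refl)).
    + exact (Hp (spec_refine _ _ _ Hne Hall Hs)).
  - intros Hsub. destruct bs as [|b l]; [contradiction|]. apply NNPP. intros N.
    destruct (proj1 (union_K_iff _ _ _ _) (Hsub (inr (b, l)) N)) as (c & Hc & Hk).
    apply closure_failures in Hk. apply Hk. exists c. split; [exact Hc|apply spec_refl].
Qed.

End Representation.

Theorem corollary5p2 (M : Type) (join : M -> M -> M) (spec : M -> list M -> Prop) :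
  is_mss join spec ->
  exists (X : Type) (K : (X -> Prop) -> (X -> Prop)) (phi : M -> X -> Prop),
    is_closure K /\
    (forall a b, phi a = phi b -> a = b) /\
    (forall a b, phi (join a b) = union (phi a) (phi b)) /\
    (forall a bs, bs <> [] -> (spec a bs <-> subset (phi a) (union_K K phi bs))).
Proof.
  intros Hmss.
  exists (point M), (nbhd_closure (spec_nbhd _ spec)), (failures _ join spec).
  split; [apply nbhd_closure_is_closure|].
  split; [exact (failures_inj _ _ _ Hmss)|].
  split; [exact (failures_join _ _ _ Hmss)|].
  exact (spec_iff_failures _ _ _ Hmss).
Qed.
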